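(* Let $T>0$, $I=[0,T]$, $\nu_1,\nu_2\in\mathbb{R}$, $p>1$. Let $\Phi:\mathbb{R}\to\mathbb{R}$ be a strictly increasing homeomorphism; let $A:W^{1,p}(I)\to C(I,\mathbb{R})$, $x\mapsto A_x$, be continuous w.r.t. the uniform topology, with $h_1,h_2\in C(I,\mathbb{R})$, $h_1,h_2\ge0$, $1/h_1,1/h_2\in L^p(I)$ and $h_1\le A_x\le h_2$ on $I$ for all $x\in W^{1,p}(I)$; let $F:W^{1,p}(I)\to L^1(I)$ be continuous with $|F_x(t)|\le\psi(t)$ for all $x$ and a.e. $t$, for some non-negative $\psi\in L^1(I)$. Let $\mathcal{P}:W^{1,p}(I)\to W^{1,p}(I)$ be the operator defined in the context. Then there exists a constant $\mathbf{c}_1>0$ such that $\|\mathcal{P}_x\|_{W^{1,p}}\le\mathbf{c}_1$ for every $x\in W^{1,p}(I)$.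
   Context: $\mathcal{F}_x(t):=\int_0^tF_x(s)\,ds$. For $x\in W^{1,p}(I)$, $\xi_x$ is the unique real number with $\int_0^T\frac{1}{A_x(t)}\Phi^{-1}(\xi_x+\mathcal{F}_x(t))\,dt=\nu_2-\nu_1$ (it exists and is unique under these hypotheses). $\mathcal{P}_x(t):=\nu_1+\int_0^t\frac{1}{A_x(s)}\Phi^{-1}(\xi_x+\mathcal{F}_x(s))\,ds$. $\|u\|_{W^{1,p}}:=\|u\|_{L^p}+\|u'\|_{L^p}$. *)

From HB Require Import structures.
From mathcomp Require Import all_boot all_order all_algebra.
From mathcomp Require Import all_classical all_reals all_analysis.
Set Implicit Arguments. Unset Strict Implicit. Unset Printing Implicit Defensive.
Import Order.TTheory GRing.Theory Num.Theory.
Import numFieldNormedType.Exports.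
Local Open Scope classical_set_scope.
Local Open Scope ring_scope.

Section Sobolev.
Variable R : realType.
Local Notation mu := (@lebesgue_measure R).

Definition Itv (T : R) : set R := `[0, T].

Definition inLp (p T : R) (f : R -> R) : Prop :=
  measurable_fun (Itv T) f /\
  (\int[mu]_(t in Itv T) ((`|f t| `^ p)%:E) < +oo)%E.

Definition Lpnorm (p T : R) (f : R -> R) : R :=
  (Rintegral mu (Itv T) (fun t => `|f t| `^ p)) `^ p^-1.

Definition inL1 (T : R) (f : R -> R) : Prop :=
  mu.-integrable (Itv T) (EFin \o f).

Definition weak_deriv (p T : R) (x g : R -> R) : Prop :=
  inLp p T x /\ inLp p T g /\
  forall t, t \in Itv T -> x t = x 0 + Rintegral mu `[0, t] g.

Definition inW1p (p T : R) (x : R -> R) : Prop := exists g, weak_deriv p T x g.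

(* the (a.e. unique) weak derivative, chosen *)
Definition wderiv (p T : R) (x : R -> R) : R -> R :=
  xget (fun _ => 0) [set g | weak_deriv p T x g].

Definition W1pnorm (p T : R) (x : R -> R) : R :=
  Lpnorm p T x + Lpnorm p T (wderiv p T x).

(* 1/h in L^p(I), with 1/h understood as +oo where h = 0:
   h vanishes only on a null subset of I and t |-> 1/h(t) is in L^p(I) *)
Definition inv_inLp (p T : R) (h : R -> R) : Prop :=
  mu (Itv T `&` [set t | h t = 0]) = 0%E /\ inLp p T (fun t => (h t)^-1).

Definition calF (F : (R -> R) -> R -> R) (x : R -> R) (t : R) : R :=
  Rintegral mu `[0, t] (F x).

Definition xi (T nu1 nu2 : R) (Phiinv : R -> R) (A F : (R -> R) -> R -> R)
    (x : R -> R) : R :=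
  xget 0 [set c : R | Rintegral mu (Itv T)
            (fun t => (A x t)^-1 * Phiinv (c + calF F x t)) = nu2 - nu1].

Definition calP (T nu1 nu2 : R) (Phiinv : R -> R) (A F : (R -> R) -> R -> R)
    (x : R -> R) (t : R) : R :=
  nu1 + Rintegral mu `[0, t]
    (fun s => (A x s)^-1 * Phiinv (xi T nu1 nu2 Phiinv A F x + calF F x s)).

End Sobolev.

From HB Require Import structures.
From mathcomp Require Import all_boot all_order all_algebra.
From mathcomp Require Import all_classical all_reals all_analysis.
From mathcomp Require Import measurable_realfun ring lra.
Import Order.TTheory GRing.Theory Num.Theory.
Import numFieldNormedType.Exports.
Local Open Scope classical_set_scope.
Local Open Scope ring_scope.

(* Off the null set where h1 vanishes, 0 < A_x <= H := max h2 + 1 and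
   1/A_x <= 1/h1, while |calF_x| <= M := ||psi||_{L^1}.  The equation defining
   xi_x bounds it uniformly: if xi_x >= Phi(k) + M, then
   Phi^{-1}(xi_x + calF_x) >= k and the integral of
   Phi^{-1}(xi_x + calF_x) / A_x is at least k T / H, which exceeds
   |nu2 - nu1| once k is large; symmetrically from below.  Hence
   |Phi^{-1}(xi_x + calF_x)| <= K with K independent of x, so the derivative
   of calP_x is dominated by K / h1 in L^p and
   |calP_x| <= |nu1| + K ||1/h1||_{L^1}. *)

Lemma nondecreasing_norm_le (R : realDomainType) (f : R -> R) (y r : R) :
  {homo f : a b / a <= b} -> `|y| <= r -> `|f y| <= `|f r| + `|f (- r)|.
Proof.
move=> f_nd; rewrite ler_norml => /andP[ry yr].
have := f_nd _ _ ry; have := f_nd _ _ yr.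
have := ler_norm (f r); have := ler_norm (- f (- r)); rewrite normrN.
have := normr_ge0 (f r); have := normr_ge0 (f (- r)).
rewrite ler_norml; lra.
Qed.

Lemma ler_1DpowR (R : realType) (p y : R) : 1 <= p -> 0 <= y -> y <= 1 + y `^ p.
Proof.
move=> p_ge1 y_ge0; have [y_le1|y_gt1] := leP y 1.
  by rewrite (le_trans y_le1)// lerDl powR_ge0.
apply: (@le_trans _ _ (y `^ p)); last by rewrite lerDr.
by rewrite -{1}(powRr1 y_ge0) ler_powR// ltW.
Qed.

Lemma ler_wpowR2r (R : realType) (r x y : R) :
  0 <= r -> 0 <= x -> x <= y -> x `^ r <= y `^ r.
Proof.
move=> r_ge0 x_ge0 xy; apply: ge0_ler_powR; rewrite ?nnegrE//.
exact: le_trans xy.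
Qed.

Lemma measurable_inv (R : realType) :
  measurable_fun [set: R] (fun y : R => y^-1).
Proof.
rewrite -(setUv [set (0:R)]); apply/measurable_funU => //.
  exact: measurableC.
split; first exact: measurable_fun_set1.
apply: open_continuous_measurable_fun.
  rewrite openC.
  exact/accessible_closed_set1/hausdorff_accessible/Rhausdorff.
by move=> y; rewrite inE /= => /eqP y0; exact: inv_continuous.
Qed.

Section integral_lemmas.
Context {d : measure_display} {X : measurableType d} {R : realType}.
Context {mu : {measure set X -> \bar R}}.

Section negligible.
Context {D N : set X}.
Hypotheses (mD : measurable D) (mN : measurable N) (muN0 : mu N = 0%E).

Lemma ae_le_Rintegral {f g : X -> R} :
  mu.-integrable D (EFin \o f) -> mu.-integrable D (EFin \o g) ->
  (forall x, D x -> ~ N x -> f x <= g x) ->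
  Rintegral mu D f <= Rintegral mu D g.
Proof.
move=> fi gi fg; rewrite /Rintegral.
rewrite (negligible_integral mN mD fi muN0) (negligible_integral mN mD gi muN0).
have mDN : measurable (D `\` N) by exact: measurableD.
apply: le_Rintegral => //; [exact: integrableS fi|exact: integrableS gi|].
by move=> x [Dx Nx]; exact: fg.
Qed.

Lemma integrable_ae_le {f g : X -> R} :
  measurable_fun D f -> mu.-integrable D (EFin \o g) ->
  (forall x, D x -> ~ N x -> `|f x| <= g x) ->
  mu.-integrable D (EFin \o f).
Proof.
move=> mf gi fg.
have mEf : measurable_fun D (EFin \o f) by exact/measurable_EFinP.
rewrite (negligible_integrable mN mD mEf muN0).
have mDN : measurable (D `\` N) by exact: measurableD.
have mEf_DN := measurable_funS mD (@subDsetl _ D N) mEf.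
apply: (le_integrable mDN mEf_DN); last exact: integrableS gi.
move=> x [Dx Nx] /=; rewrite lee_fin (le_trans (fg x Dx Nx))//; exact: ler_norm.
Qed.

End negligible.

Lemma le_Rintegral_subset (D E : set X) (f : X -> R) :
  measurable D -> measurable E -> D `<=` E ->
  mu.-integrable E (EFin \o f) -> (forall x, E x -> 0 <= f x) ->
  Rintegral mu D f <= Rintegral mu E f.
Proof.
move=> mD mE DE fi f_ge0; have fiD := integrableS mE mD DE fi.
rewrite /Rintegral fine_le//; [exact: integrable_fin_num..|].
by apply: ge0_subset_integral => //; case/integrableP: fi.
Qed.

Lemma integrable_of_powR {D : set X} {p : R} {f : X -> R} :
  measurable D -> (mu D < +oo)%E -> 1 <= p -> measurable_fun D f ->
  mu.-integrable D (EFin \o (fun x => `|f x| `^ p)) ->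
  mu.-integrable D (EFin \o f).
Proof.
move=> mD muD p_ge1 mf fpi.
have oneD : mu.-integrable D (EFin \o cst (1 : R)).
  by apply: measurable_bounded_integrable => //; exact: bounded_cst.
apply: (le_integrable mD _ _ (integrableD mD oneD fpi)).
  exact/measurable_EFinP.
move=> x _ /=; rewrite lee_fin [leRHS]ger0_norm ?addr_ge0 ?powR_ge0//.
exact: ler_1DpowR.
Qed.

End integral_lemmas.

Section interval_lemmas.
Context {R : realType}.
Local Notation mu := (@lebesgue_measure R).
(* The Lebesgue measure is defined on this copy of R; sets whose measure is
   taken are typed there to avoid mismatching measurable-type instances. *)
Local Notation LR := (measurableTypeR R).
Implicit Types (p T t B : R) (f g u v w : R -> R).

Lemma in_Itv T t : (t \in Itv T) = (0 <= t <= T).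
Proof.
apply/idP/idP => [/set_mem|tI]; first by rewrite /Itv /= in_itv.
by apply/mem_set; rewrite /Itv /= in_itv.
Qed.

Lemma measurable_Itv T : measurable (Itv T : set LR).
Proof. exact: measurable_itv. Qed.

Lemma subset_Itv {T t} : t \in Itv T -> `[0, t] `<=` Itv T.
Proof.
rewrite in_Itv => /andP[_ tT] s; rewrite /Itv /= !in_itv /= => /andP[-> st].
exact: le_trans st tT.
Qed.

Lemma lebesgue_measure_Itv T : 0 <= T -> mu (Itv T) = T%:E.
Proof.
move=> T_ge0; rewrite /Itv lebesgue_measure_itv/=.
case: ifPn => [_|]; first by rewrite -EFinB subr0.
by rewrite lte_fin -leNgt => T_le0; apply/eqP; rewrite eq_sym eqe eq_le T_le0.
Qed.

Lemma lebesgue_measure_Itv_lty T : 0 <= T -> (mu (Itv T) < +oo)%E.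
Proof. by move=> T_ge0; rewrite lebesgue_measure_Itv// ltry. Qed.

Lemma Rintegral_cst_Itv {T} B : 0 <= T -> Rintegral mu (Itv T) (cst B) = B * T.
Proof.
move=> T_ge0; rewrite Rintegral_cst; last exact: measurable_Itv.
by have := lebesgue_measure_Itv T T_ge0; move=> /= ->.
Qed.

Lemma inLp_powR_integrable {p T f} : inLp p T f ->
  mu.-integrable (Itv T) (EFin \o (fun t => `|f t| `^ p)).
Proof.
move=> [mf fpi]; apply/integrableP; split.
  apply/measurable_EFinP; apply: measurableT_comp (measurable_powR p) _.
  exact: measurableT_comp.
by under eq_integral do rewrite /= ger0_norm ?powR_ge0//.
Qed.

Lemma inLp_integrable {p T f} : 0 <= T -> 1 <= p -> inLp p T f ->
  mu.-integrable (Itv T) (EFin \o f).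
Proof.
move=> T_ge0 p_ge1 Lpf; have [mf _] := Lpf.
apply: (integrable_of_powR (mu:=mu) (measurable_Itv T) _ p_ge1).
- exact: lebesgue_measure_Itv_lty.
- exact: mf.
- exact: inLp_powR_integrable Lpf.
Qed.

Lemma integrable_cst_Itv {T} B : 0 <= T ->
  mu.-integrable (Itv T) (EFin \o cst B).
Proof.
move=> T_ge0; apply: measurable_bounded_integrable => //.
- exact: measurable_Itv.
- exact: lebesgue_measure_Itv_lty.
- exact: bounded_cst.
Qed.

Lemma integrable_powR_inLp {p T f} : measurable_fun (Itv T) f ->
  mu.-integrable (Itv T) (EFin \o (fun t => `|f t| `^ p)) -> inLp p T f.
Proof.
move=> mf /integrableP[_ fpi]; split => //.
by move: fpi; under eq_integral do rewrite /= ger0_norm ?powR_ge0//.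
Qed.

Lemma inLp_cst {p T} B : 0 <= T -> inLp p T (cst B).
Proof.
move=> T_ge0; apply: integrable_powR_inLp; first exact: measurable_cst.
exact: integrable_cst_Itv (`|B| `^ p) T_ge0.
Qed.

Lemma inLp_scale {p T f} k : inLp p T f -> inLp p T (fun t => k * f t).
Proof.
move=> Lpf; have [mf _] := Lpf; apply: integrable_powR_inLp.
  exact: measurable_funM (measurable_cst k) mf.
have := integrableZl (measurable_Itv T) (`|k| `^ p) (inLp_powR_integrable Lpf).
apply: eq_integrable; first exact: measurable_Itv.
by move=> t _ /=; rewrite normrM powRM ?normr_ge0// EFinM.
Qed.

Section dominated.
Context {p T : R} {N : set LR} {g h : R -> R}.
Hypotheses (p_ge0 : 0 <= p) (mN : measurable N) (muN0 : mu N = 0%E).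
Hypotheses (mg : measurable_fun (Itv T) g) (Lph : inLp p T h).
Hypothesis g_le_h : forall t, Itv T t -> ~ N t -> `|g t| <= h t.

Let powR_le t : Itv T t -> ~ N t -> `|g t| `^ p <= `|h t| `^ p.
Proof.
move=> It Nt; apply: ler_wpowR2r => //.
exact: le_trans (g_le_h t It Nt) (ler_norm _).
Qed.

Lemma inLp_ae_le : inLp p T g.
Proof.
apply: integrable_powR_inLp mg _.
apply: (integrable_ae_le (measurable_Itv T) mN muN0).
- apply: measurableT_comp (measurable_powR p) _; exact: measurableT_comp.
- exact: inLp_powR_integrable Lph.
- by move=> t It Nt; rewrite ger0_norm ?powR_ge0//; exact: powR_le.
Qed.

Lemma Lpnorm_ae_le : Lpnorm p T g <= Lpnorm p T h.
Proof.
rewrite /Lpnorm; apply: ler_wpowR2r; first by rewrite invr_ge0.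
  by apply: Rintegral_ge0 => t _; exact: powR_ge0.
apply: (ae_le_Rintegral (measurable_Itv T) mN muN0) powR_le.
- exact: inLp_powR_integrable inLp_ae_le.
- exact: inLp_powR_integrable Lph.
Qed.

End dominated.

Lemma norm_primitive_le_dominated T f psi :
  mu.-integrable (Itv T) (EFin \o f) -> mu.-integrable (Itv T) (EFin \o psi) ->
  (forall t, t \in Itv T -> 0 <= psi t) ->
  {ae mu, forall t, Itv T t -> `|f t| <= psi t} ->
  forall t, t \in Itv T ->
    `|Rintegral mu `[0, t] f| <= Rintegral mu (Itv T) psi.
Proof.
move=> fi psii psi_ge0 [N [mN muN0 fpsiN]] t tI.
have s0t := subset_Itv tI.
have m0t : measurable (`[0, t] : set LR) by exact: measurable_itv.
have fi0t := integrableS (measurable_Itv T) m0t s0t fi.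
apply: le_trans (le_normr_Rintegral m0t fi0t) _.
apply: (@le_trans _ _ (Rintegral mu `[0, t] psi)).
  apply: (ae_le_Rintegral m0t mN muN0); first exact: integrable_norm fi0t.
    exact: integrableS (measurable_Itv T) m0t s0t psii.
  move=> s s0t' Ns; apply: contrapT => fpsi; apply: Ns; apply: fpsiN => /=.
  by move/(_ (s0t _ s0t')).
apply: le_Rintegral_subset => //; first exact: measurable_Itv.
by move=> s Is; apply: psi_ge0; rewrite inE.
Qed.

Lemma primitive_restrict_eq0 {T w} : 0 <= T ->
  (forall t, t \in Itv T -> Rintegral mu `[0, t] w = 0) ->
  forall y, Rintegral mu `[0, y] (w \_ (Itv T)) = 0.
Proof.
move=> T_ge0 w0 y; have [y_lt0|y_ge0] := ltP y 0.
  by rewrite set_itv_ge ?Rintegral_set0// bnd_simp -ltNge.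
rewrite -Rintegral_mkcondr.
have [m mI ->] : exists2 m, m \in Itv T & `[0, y] `&` Itv T = `[0, m]%classic.
  have [yT|yT] := leP y T.
    exists y; first by rewrite in_Itv y_ge0 yT.
    by rewrite setIidl//; apply: subset_Itv; rewrite in_Itv y_ge0.
  exists T; first by rewrite in_Itv T_ge0 lexx.
  by rewrite setIidr//; apply: subset_itvl; rewrite bnd_simp ltW.
exact: w0.
Qed.

Lemma ae_eq0_of_primitive_eq0 {T w} : 0 <= T ->
  mu.-integrable (Itv T) (EFin \o w) ->
  (forall t, t \in Itv T -> Rintegral mu `[0, t] w = 0) ->
  {ae mu, forall t, Itv T t -> w t = 0}.
Proof.
move=> T_ge0 wi w0; pose d := w \_ (Itv T).
have dT : mu.-integrable setT (EFin \o d).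
  have := (integrable_mkcond _ (measurable_Itv T)).1 wi.
  by apply: eq_integrable => // t _; rewrite /d restrict_EFin.
have dint y : mu.-integrable [set` Interval (BLeft 0) (BRight y)] (EFin \o d).
  by apply: integrableS dT => //; exact: measurable_itv.
have dloc : locally_integrable [set: R] d.
  exact: integrable_locally (measurable_Itv T) wi.
have := FTC1 dint dloc; set W := (fun x => _) => dW.
have W0 : W = cst 0.
  by apply/funext => y; rewrite /W /=; exact: primitive_restrict_eq0.
have t_neq0 : \forall t \ae mu, t != 0.
  exists [set 0]; split => //; first exact: lebesgue_measure_set1.
  by move=> t /= /negP; rewrite negbK => /eqP.
move: t_neq0 dW; apply: filterS2; first exact: (ae_filter_ringOfSetsType mu).
move=> t t_neq0 dWt It.
have : 0 < t.
  by move: It; rewrite /Itv /= in_itv lt_neqAle eq_sym t_neq0 => /andP[].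
rewrite -lte_fin => /dWt [_].
by rewrite W0 derive1_cst /d patchE mem_set.
Qed.

Lemma ae_eq_of_primitive_eq {T u v} : 0 <= T ->
  mu.-integrable (Itv T) (EFin \o u) -> mu.-integrable (Itv T) (EFin \o v) ->
  (forall t, t \in Itv T -> Rintegral mu `[0, t] u = Rintegral mu `[0, t] v) ->
  {ae mu, forall t, Itv T t -> u t = v t}.
Proof.
move=> T_ge0 ui vi uv; have mI := measurable_Itv T.
have wi : mu.-integrable (Itv T) (EFin \o (fun t => u t - v t)).
  by have := integrableB mI ui vi; apply: eq_integrable.
have w0 t : t \in Itv T -> Rintegral mu `[0, t] (fun t => u t - v t) = 0.
  move=> tI; have m0t : measurable (`[0, t] : set LR) by exact: measurable_itv.
  have s0t := subset_Itv tI.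
  rewrite RintegralB//; first by rewrite uv// subrr.
  - exact: integrableS mI m0t s0t ui.
  - exact: integrableS mI m0t s0t vi.
move: (ae_eq0_of_primitive_eq0 T_ge0 wi w0).
apply: filterS; first exact: (ae_filter_ringOfSetsType mu).
by move=> t uv0 It; apply/eqP; rewrite -subr_eq0; apply/eqP; exact: uv0.
Qed.

Lemma Lpnorm_wderiv {p T x g} : 0 <= T -> 1 <= p -> weak_deriv p T x g ->
  Lpnorm p T (wderiv p T x) = Lpnorm p T g.
Proof.
move=> T_ge0 p_ge1 xg.
have [_ [Lpg' xg']] : weak_deriv p T x (wderiv p T x).
  exact: (xgetPex _ (ex_intro _ g xg)).
have [_ [Lpg xg_eq]] := xg.
have g'g : {ae mu, forall t, Itv T t -> wderiv p T x t = g t}.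
  apply: ae_eq_of_primitive_eq T_ge0 (inLp_integrable T_ge0 p_ge1 Lpg')
    (inLp_integrable T_ge0 p_ge1 Lpg) _.
  by move=> t tI; apply: (@addrI _ (x 0)); rewrite -xg' // -xg_eq.
rewrite /Lpnorm; congr (_ `^ _); congr fine.
apply: ae_eq_integral => //.
- exact: measurable_Itv.
- by case/integrableP: (inLp_powR_integrable Lpg').
- by case/integrableP: (inLp_powR_integrable Lpg).
- move: g'g; apply: filterS; first exact: (ae_filter_ringOfSetsType mu).
  by move=> t g't It; rewrite /= g't.
Qed.

End interval_lemmas.

Section calP_bound.
Context {R : realType}.
Variables (T p nu1 nu2 M H : R) (Phi Phiinv hi : R -> R).
Local Notation mu := (@lebesgue_measure R).
Local Notation LR := (measurableTypeR R).
Variable N : set LR.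
Hypotheses (T_gt0 : 0 < T) (p_gt1 : 1 < p) (H_gt0 : 0 < H).
Hypotheses (mN : measurable N) (muN0 : mu N = 0%E).
Hypotheses (Phi_inc : {homo Phi : a b / a < b})
  (PhiK : cancel Phi Phiinv) (PhiinvK : cancel Phiinv Phi)
  (Phiinv_cont : continuous Phiinv).
Hypothesis hi_Lp : inLp p T hi.

Let p_ge0 : 0 <= p.
Proof. exact: ltW (lt_trans ltr01 p_gt1). Qed.

Let Phiinv_nd : {homo Phiinv : a b / a <= b}.
Proof. exact/mono2W/(can_mono PhiinvK)/le_mono. Qed.

Let hi_int : mu.-integrable (Itv T) (EFin \o hi).
Proof. exact: inLp_integrable (ltW T_gt0) (ltW p_gt1) hi_Lp. Qed.

Let scaled_hi_int K : mu.-integrable (Itv T) (EFin \o (fun t => K * hi t)).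
Proof.
have := integrableZl (measurable_Itv T) K hi_int.
apply: eq_integrable; first exact: measurable_Itv.
by move=> t _ /=; rewrite EFinM.
Qed.

Definition Phiinv_bound (r : R) : R := `|Phiinv r| + `|Phiinv (- r)|.

(* k is chosen so that k T / H = |nu2 - nu1| + 1 > |nu2 - nu1|. *)
Definition xi_bound : R :=
  let k := H * (`|nu2 - nu1| + 1) / T in `|Phi k| + `|Phi (- k)| + M.

Definition derivative_bound : R := Phiinv_bound (xi_bound + M).

Definition W1p_bound : R :=
  Lpnorm p T (cst (`|nu1| + derivative_bound * Rintegral mu (Itv T) hi)) +
  Lpnorm p T (fun t => derivative_bound * hi t).

Section fixed_x.
Variables (A F : (R -> R) -> R -> R) (x : R -> R).
Hypotheses (A_cont : {within Itv T, continuous (A x)}) (Fx_int : inL1 T (F x)).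
Hypothesis calF_le : forall t, t \in Itv T -> `|calF F x t| <= M.
Hypothesis A_gt0_le : forall t, Itv T t -> ~ N t -> 0 < A x t <= H.
Hypothesis invA_le : forall t, Itv T t -> ~ N t -> (A x t)^-1 <= hi t.

Local Notation integrand c := (fun t => (A x t)^-1 * Phiinv (c + calF F x t)).

Lemma integrand_measurable c : measurable_fun (Itv T : set LR) (integrand c).
Proof.
have mI := measurable_Itv T.
apply: measurable_funM.
  apply: (measurableT_comp (measurable_inv R)).
  exact: subspace_continuous_measurable_fun.
apply: subspace_continuous_measurable_fun => // t.
apply: continuous_comp; last exact: Phiinv_cont.
apply: (@within_continuousD _ R R (Itv T) (cst c) (calF F x)) => //.
  by move=> s; exact: cst_continuous.
exact: parameterized_integral_continuous (ltW T_gt0) Fx_int.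
Qed.

Lemma norm_integrand_le c r t : `|c| <= r -> Itv T t -> ~ N t ->
  `|integrand c t| <= Phiinv_bound (r + M) * hi t.
Proof.
move=> cr It Nt; have /andP[A_gt0 _] := A_gt0_le t It Nt.
rewrite normrM mulrC ler_pM//.
  apply: nondecreasing_norm_le Phiinv_nd _.
  by rewrite (le_trans (ler_normD _ _))// lerD// calF_le// inE.
by rewrite normrV ?unitfE ?gt_eqF// gtr0_norm// invA_le.
Qed.

Lemma integrand_integrable c : mu.-integrable (Itv T) (EFin \o integrand c).
Proof.
apply: (integrable_ae_le (measurable_Itv T) mN muN0).
- exact: integrand_measurable.
- exact: scaled_hi_int (Phiinv_bound (`|c| + M)).
- by move=> t It Nt; exact: norm_integrand_le.
Qed.

Lemma Rintegral_integrand_ge {c k} : 0 <= k -> Phi k + M <= c ->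
  k * T / H <= Rintegral mu (Itv T) (integrand c).
Proof.
move=> k_ge0 ck; rewrite mulrAC -(Rintegral_cst_Itv _ (ltW T_gt0)).
apply: (ae_le_Rintegral (measurable_Itv T) mN muN0).
- exact: integrable_cst_Itv (ltW T_gt0).
- exact: integrand_integrable.
move=> t It Nt; have /andP[A_gt0 A_le] := A_gt0_le t It Nt.
have k_le : k <= Phiinv (c + calF F x t).
  rewrite -{1}(PhiK k); apply: Phiinv_nd.
  have := calF_le t (mem_set It); rewrite ler_norml; lra.
rewrite /= mulrC; apply: ler_pM => //; first by rewrite invr_ge0 ltW.
by rewrite lef_pV2 ?posrE.
Qed.

Lemma Rintegral_integrand_le {c k} : 0 <= k -> c <= Phi (- k) - M ->
  Rintegral mu (Itv T) (integrand c) <= - (k * T / H).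
Proof.
move=> k_ge0 ck; rewrite -!mulNr mulrAC -(Rintegral_cst_Itv _ (ltW T_gt0)).
apply: (ae_le_Rintegral (measurable_Itv T) mN muN0).
- exact: integrand_integrable.
- exact: integrable_cst_Itv (ltW T_gt0).
move=> t It Nt; have /andP[A_gt0 A_le] := A_gt0_le t It Nt.
have le_k : Phiinv (c + calF F x t) <= - k.
  rewrite -(PhiK (- k)); apply: Phiinv_nd.
  have := calF_le t (mem_set It); rewrite ler_norml; lra.
have : H^-1 * k <= (A x t)^-1 * - Phiinv (c + calF F x t).
  apply: ler_pM => //; first by rewrite invr_ge0 ltW.
    by rewrite lef_pV2 ?posrE.
  by rewrite lerNr.
rewrite mulrN /= mulNr (mulrC k); lra.
Qed.

Lemma solution_norm_le c :
  Rintegral mu (Itv T) (integrand c) = nu2 - nu1 -> `|c| <= xi_bound.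
Proof.
move=> c_sol; rewrite /xi_bound; set k := H * _ / T.
have k_ge0 : 0 <= k by rewrite /k divr_ge0 ?mulr_ge0 ?addr_ge0// ltW.
have kTH : k * T / H = `|nu2 - nu1| + 1.
  by rewrite /k; field; rewrite !gt_eqF.
have nu_le := ler_norm (nu2 - nu1).
have Nnu_le : - (nu2 - nu1) <= `|nu2 - nu1| by rewrite -normrN ler_norm.
have Phik_le := ler_norm (Phi k).
have NPhik_le : - Phi (- k) <= `|Phi (- k)| by rewrite -normrN ler_norm.
have Phik_ge0 := normr_ge0 (Phi k); have NPhik_ge0 := normr_ge0 (Phi (- k)).
rewrite leNgt; apply/negP => c_big.
have [c_ge0|c_lt0] := leP 0 c.
- rewrite (ger0_norm c_ge0) in c_big.
  have /(Rintegral_integrand_ge k_ge0) : Phi k + M <= c by lra.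
  by rewrite c_sol kTH; lra.
- rewrite (ltr0_norm c_lt0) in c_big.
  have /(Rintegral_integrand_le k_ge0) : c <= Phi (- k) - M by lra.
  by rewrite c_sol kTH; lra.
Qed.

(* When the equation has no solution, xi_x is the default value 0. *)
Lemma norm_xi_le : `|xi T nu1 nu2 Phiinv A F x| <= xi_bound.
Proof.
rewrite /xi; case: xgetP => [c -> c_sol|_]; first exact: solution_norm_le.
have M_ge0 : 0 <= M.
  by apply: le_trans (normr_ge0 _) (calF_le 0 _); rewrite in_Itv lexx ltW.
by rewrite normr0 /xi_bound addr_ge0 ?addr_ge0.
Qed.

Local Notation xi_x := (xi T nu1 nu2 Phiinv A F x).
Local Notation P := (calP T nu1 nu2 Phiinv A F x).

Lemma norm_derivative_le t : Itv T t -> ~ N t ->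
  `|integrand xi_x t| <= derivative_bound * hi t.
Proof. exact: norm_integrand_le norm_xi_le. Qed.

Lemma Lpnorm_derivative_le :
  Lpnorm p T (integrand xi_x) <= Lpnorm p T (fun t => derivative_bound * hi t).
Proof.
apply: (Lpnorm_ae_le p_ge0 mN muN0).
- exact: integrand_measurable.
- exact: inLp_scale derivative_bound hi_Lp.
- exact: norm_derivative_le.
Qed.

Lemma calP0 : P 0 = nu1.
Proof. by rewrite /calP set_itv1 Rintegral_set1 addr0. Qed.

Lemma calP_measurable : measurable_fun (Itv T) P.
Proof.
apply: subspace_continuous_measurable_fun; first exact: measurable_Itv.
apply: (@within_continuousD _ R R (Itv T) (cst nu1)).
  by move=> s; exact: cst_continuous.
exact: parameterized_integral_continuous (ltW T_gt0) (integrand_integrable _).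
Qed.

Lemma norm_calP_le t : Itv T t ->
  `|P t| <= `|nu1| + derivative_bound * Rintegral mu (Itv T) hi.
Proof.
move=> It; have s0t := subset_Itv (mem_set It).
have mI := measurable_Itv T; have m0t : measurable (`[0, t] : set LR).
  exact: measurable_itv.
have g_int := integrand_integrable xi_x.
rewrite /calP (le_trans (ler_normD _ _))// lerD2l.
apply: le_trans (le_normr_Rintegral m0t (integrableS mI m0t s0t g_int)) _.
apply: (@le_trans _ _ (Rintegral mu (Itv T) (fun s => `|integrand xi_x s|))).
  by apply: le_Rintegral_subset => //; exact: integrable_norm.
rewrite -(RintegralZl _ mI hi_int); apply: (ae_le_Rintegral mI mN muN0).
- exact: integrable_norm.
- exact: scaled_hi_int.
- exact: norm_derivative_le.
Qed.

Lemma calP_weak_deriv : weak_deriv p T P (integrand xi_x).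
Proof.
split; last split.
- apply: (inLp_ae_le p_ge0 mN muN0 calP_measurable (inLp_cst _ (ltW T_gt0))).
  by move=> t It _; exact: norm_calP_le.
- apply: (inLp_ae_le p_ge0 mN muN0).
  + exact: integrand_measurable.
  + exact: inLp_scale derivative_bound hi_Lp.
  + exact: norm_derivative_le.
- by move=> t _; rewrite calP0.
Qed.

Lemma W1pnorm_calP_le : W1pnorm p T P <= W1p_bound.
Proof.
rewrite /W1pnorm (Lpnorm_wderiv (ltW T_gt0) (ltW p_gt1) calP_weak_deriv).
apply: lerD; last exact: Lpnorm_derivative_le.
apply: (Lpnorm_ae_le p_ge0 mN muN0 calP_measurable (inLp_cst _ (ltW T_gt0))).
by move=> t It _; exact: norm_calP_le.
Qed.

End fixed_x.

Lemma W1pnorm_calP_uniform_bound : exists2 c1 : R, 0 < c1 &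
  forall (A F : (R -> R) -> R -> R) (x : R -> R),
    {within Itv T, continuous (A x)} -> inL1 T (F x) ->
    (forall t, t \in Itv T -> `|calF F x t| <= M) ->
    (forall t, Itv T t -> ~ N t -> 0 < A x t <= H) ->
    (forall t, Itv T t -> ~ N t -> (A x t)^-1 <= hi t) ->
    W1pnorm p T (calP T nu1 nu2 Phiinv A F x) <= c1.
Proof.
have W1p_bound_ge0 : 0 <= W1p_bound.
  by rewrite /W1p_bound /Lpnorm addr_ge0 ?powR_ge0.
exists (W1p_bound + 1) => [|A F x A_cont Fx_int calF_le A_gt0_le invA_le].
  by rewrite ltr_wpDl.
have := W1pnorm_calP_le A F x A_cont Fx_int calF_le A_gt0_le invA_le.
by move/le_trans; apply; rewrite lerDl.
Qed.

End calP_bound.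

Theorem lemma2p7 (R : realType) (T nu1 nu2 p : R) (Phi Phiinv : R -> R)
    (A F : (R -> R) -> R -> R) (h1 h2 psi : R -> R) :
  0 < T -> 1 < p ->
  (* Phi : R -> R strictly increasing homeomorphism with inverse Phiinv *)
  {homo Phi : a b / a < b} -> continuous Phi -> continuous Phiinv ->
  cancel Phi Phiinv -> cancel Phiinv Phi ->
  (* A : W^{1,p}(I) -> C(I), continuous for the uniform topology *)
  (forall x, inW1p p T x -> {within Itv T, continuous (A x)}) ->
  (forall x, inW1p p T x -> forall e : R, 0 < e -> exists2 d : R, 0 < d &
     forall y, inW1p p T y -> W1pnorm p T (y \- x) < d ->
       forall t, t \in Itv T -> `|A y t - A x t| < e) ->
  {within Itv T, continuous h1} -> {within Itv T, continuous h2} ->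
  (forall t, t \in Itv T -> 0 <= h1 t) -> (forall t, t \in Itv T -> 0 <= h2 t) ->
  inv_inLp p T h1 -> inv_inLp p T h2 ->
  (forall x, inW1p p T x -> forall t, t \in Itv T -> h1 t <= A x t <= h2 t) ->
  (* F : W^{1,p}(I) -> L^1(I), continuous *)
  (forall x, inW1p p T x -> inL1 T (F x)) ->
  (forall x, inW1p p T x -> forall e : R, 0 < e -> exists2 d : R, 0 < d &
     forall y, inW1p p T y -> W1pnorm p T (y \- x) < d ->
       Rintegral lebesgue_measure (Itv T) (fun t => `|F y t - F x t|) < e) ->
  (* domination by a non-negative psi in L^1(I) *)
  (forall t, t \in Itv T -> 0 <= psi t) -> inL1 T psi ->
  (forall x, inW1p p T x ->
     {ae lebesgue_measure, forall t, Itv T t -> `|F x t| <= psi t}) ->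
  exists2 c1 : R, 0 < c1 &
    forall x, inW1p p T x -> W1pnorm p T (calP T nu1 nu2 Phiinv A F x) <= c1.
Proof.
move=> T_gt0 p_gt1 Phi_inc _ Phiinv_cont PhiK PhiinvK A_cont _ h1_cont h2_cont
  h1_ge0 h2_ge0 [h1_null h1_Lp] _ A_between F_int _ psi_ge0 psi_int F_le_psi.
have [c0 c0I h2_max] := EVT_max (ltW T_gt0) h2_cont.
pose H := h2 c0 + 1.
have H_gt0 : 0 < H by have := h2_ge0 c0 (mem_set c0I); rewrite /H; lra.
pose N : set (measurableTypeR R) := Itv T `&` [set t | h1 t = 0].
have mN : measurable N.
  have mh1 : measurable_fun (Itv T) h1.
    exact: subspace_continuous_measurable_fun (measurable_Itv T) h1_cont.
  exact: mh1 (measurable_Itv T) _ (measurable_set1 0).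
have h1_gt0 t : Itv T t -> ~ N t -> 0 < h1 t.
  move=> It Nt; rewrite lt_neqAle h1_ge0 ?andbT; last exact: mem_set.
  by apply/eqP => h1t; apply: Nt; split.
have [c1 c1_gt0 c1_bound] := W1pnorm_calP_uniform_bound T p nu1 nu2
  (Rintegral lebesgue_measure (Itv T) psi) H Phi Phiinv (fun t => (h1 t)^-1) N
  T_gt0 p_gt1 H_gt0 mN h1_null Phi_inc PhiK PhiinvK Phiinv_cont h1_Lp.
exists c1 => // x xW; apply: c1_bound.
- exact: A_cont.
- exact: F_int.
- exact: norm_primitive_le_dominated (F_int x xW) psi_int psi_ge0
    (F_le_psi x xW).
- move=> t It Nt; have /andP[h1_le_A A_le_h2] := A_between x xW t (mem_set It).
  rewrite (lt_le_trans (h1_gt0 t It Nt) h1_le_A) /=.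
  by rewrite (le_trans A_le_h2) // (le_trans (h2_max t It)) // lerDl.
- move=> t It Nt; have /andP[h1_le_A _] := A_between x xW t (mem_set It).
  by rewrite lef_pV2 ?posrE// (lt_le_trans (h1_gt0 t It Nt)).
Qed.
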